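(* In the setting described in the context, fix $\mathbf W^{[t]}\in\mathcal B$ with $\mathbf F^{[t]}:=\mathbf F(\mathbf W^{[t]})$ invertible, let $\bm\Phi^{[t]}=(\mathbf F^{[t]})^{-2}$, and let $\xi_k^{[t]},\eta_k^{[t]},\beta_k^{[t]},\bm\Sigma_1^{[t]},\bm\Sigma_2^{[t]},\mathbf Q^{[t]}$ be the quantities of the context evaluated at $\mathbf W^{[t]}$. Define for $\mathbf W=[\mathbf w_{c1},\dots,\mathbf w_{cK},\mathbf W_s]$ $$r_k^{[t]}(\mathbf W)=\log(1+\xi_k^{[t]})+2\Re\{\mathbf h_k^H\mathbf w_{ck}\eta_k^{[t]}\}-\xi_k^{[t]}-\beta_k^{[t]}\Big(\sum_{j=1}^K|\mathbf h_k^H\mathbf w_{cj}|^2+\|\mathbf h_k^H\mathbf W_s\|_F^2+\sigma_{ck}^2\Big).$$ Then the problem $$\max_{\mathbf W\in\mathcal B}\ \delta_c\sum_{k=1}^K r_k^{[t]}(\mathbf W)+\delta_s\big(\mathrm{tr}(\mathbf F(\mathbf W)\bm\Phi^{[t]})-2\,\mathrm{tr}(\mathbf F^{[t]})\big)$$ can be recast as $$\max_{\mathbf W\in\mathcal B}\ 2\delta_c\Re\{\mathrm{tr}(\mathbf W_c\bm\Sigma_1^{[t]}\mathbf H^H)\}+\delta_s\Re\{\mathrm{tr}(\mathbf W\mathbf W^H\mathbf Q^{[t]})\}-\delta_c\,\mathrm{tr}(\mathbf W\mathbf W^H\mathbf H\bm\Sigma_2^{[t]}\mathbf H^H),$$ i.e.,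 the two objectives differ on $\mathcal B$ by a quantity that does not depend on $\mathbf W$.
   Context: Positive integers $N_t,N_r,K,M,L$, nonnegative integer $N_s$; channels $\mathbf h_k\in\mathbb C^{N_t}$, $\mathbf H=[\mathbf h_1,\dots,\mathbf h_K]$, noise variances $\sigma_{ck}^2>0$; $\sigma_s^2>0$; weights $\delta_c,\delta_s\ge0$; $P_t>0$. $\mathbf W=[\mathbf W_c,\mathbf W_s]\in\mathbb C^{N_t\times(K+N_s)}$, $\mathbf W_c=[\mathbf w_{c1},\dots,\mathbf w_{cK}]$, $\mathbf R_x=\mathbf W\mathbf W^H$; $\mathcal B=\{\mathbf W:\mathrm{tr}(\mathbf W\mathbf W^H)=P_t\}$. Sensing model: differentiable $\mathbf a:\mathbb R^2\to\mathbb C^{N_t}$, $\mathbf b:\mathbb R^2\to\mathbb C^{N_r}$; parameters $\theta_m,\phi_m\in\mathbb R,\alpha_m\in\mathbb C$; $\mathbf A=[\mathbf a(\theta_m,\phi_m)]_m$, $\mathbf B=[\mathbf b(\theta_m,\phi_m)]_m$, $\mathbf U=\mathrm{diag}(\alpha_m)$; $\dot{\mathbf A}_\theta,\dot{\mathbf A}_\phi,\dot{\mathbf B}_\theta,\dot{\mathbf B}_\phi$ have $m$-th columns the partial derivatives of $\mathbf a$ resp. $\mathbf b$ with respect to first resp. second argument at $(\theta_m,\phi_m)$. $\mathbf F(\mathbf W)=\frac{2L}{\sigma_s^2}\begin{bmatrix}\Re\mathbf F_{11}&\Re\mathbf F_{12}&\Re\mathbf F_{13}&-\Im\mathbf F_{13}\\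 \Re\mathbf F_{12}^{\mathsf T}&\Re\mathbf F_{22}&\Re\mathbf F_{23}&-\Im\mathbf F_{23}\\ \Re\mathbf F_{13}^{\mathsf T}&\Re\mathbf F_{23}^{\mathsf T}&\Re\mathbf F_{33}&-\Im\mathbf F_{33}\\ -\Im\mathbf F_{13}^{\mathsf T}&-\Im\mathbf F_{23}^{\mathsf T}&-\Im\mathbf F_{33}^{\mathsf T}&\Re\mathbf F_{33}\end{bmatrix}$, with $\mathbf F_{11}=(\mathbf U\mathbf A^H\mathbf R_x\mathbf A\mathbf U^H)^{\mathsf T}\odot(\dot{\mathbf B}_\theta^H\dot{\mathbf B}_\theta)+(\mathbf U\mathbf A^H\mathbf R_x\dot{\mathbf A}_\theta\mathbf U^H)^{\mathsf T}\odot(\mathbf B^H\dot{\mathbf B}_\theta)+(\mathbf U\dot{\mathbf A}_\theta^H\mathbf R_x\mathbf A\mathbf U^H)^{\mathsf T}\odot(\dot{\mathbf B}_\theta^H\mathbf B)+(\mathbf U\dot{\mathbf A}_\theta^H\mathbf R_x\dot{\mathbf A}_\theta\mathbf U^H)^{\mathsf T}\odot(\mathbf B^H\mathbf B)$; $\mathbf F_{12}=(\mathbf U\mathbf A^H\mathbf R_x\mathbf A\mathbf U^H)^{\mathsf T}\odot(\dot{\mathbf B}_\theta^H\dot{\mathbf B}_\phi)+(\mathbf U\mathbf A^H\mathbf R_x\dot{\mathbf A}_\theta\mathbf U^H)^{\mathsf T}\odot(\mathbf B^H\dot{\mathbf B}_\phi)+(\mathbf U\dot{\mathbf A}_\phi^H\mathbf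 R_x\mathbf A\mathbf U^H)^{\mathsf T}\odot(\dot{\mathbf B}_\theta^H\mathbf B)+(\mathbf U\dot{\mathbf A}_\phi^H\mathbf R_x\dot{\mathbf A}_\theta\mathbf U^H)^{\mathsf T}\odot(\mathbf B^H\mathbf B)$; $\mathbf F_{22}$ = $\mathbf F_{11}$ with $\theta$ replaced by $\phi$; $\mathbf F_{13}=(\mathbf A^H\mathbf R_x\mathbf A\mathbf U^H)^{\mathsf T}\odot(\dot{\mathbf B}_\theta^H\mathbf B)+(\mathbf A^H\mathbf R_x\dot{\mathbf A}_\theta\mathbf U^H)^{\mathsf T}\odot(\mathbf B^H\mathbf B)$; $\mathbf F_{23}$ = $\mathbf F_{13}$ with $\theta$ replaced by $\phi$; $\mathbf F_{33}=(\mathbf A^H\mathbf R_x\mathbf A)^{\mathsf T}\odot(\mathbf B^H\mathbf B)$. Communications quantities at $\mathbf W$: $I_k=\sum_{j\ne k}|\mathbf h_k^H\mathbf w_{cj}|^2+\|\mathbf h_k^H\mathbf W_s\|_F^2+\sigma_{ck}^2$, $T_k=I_k+|\mathbf h_k^H\mathbf w_{ck}|^2$, $\xi_k=|\mathbf h_k^H\mathbf w_{ck}|^2/I_k$, $\eta_k=\overline{\mathbf h_k^H\mathbf w_{ck}}/I_k$ (which equals $\xi_k/(\mathbf h_k^H\mathbf w_{ck})$ when the latter is defined), $\beta_k=\xi_k/T_k$, $\bm\Sigma_1=\mathrm{diag}(\eta_1,\dots,\eta_K)$, $\bm\Sigma_2=\mathrm{diag}(\beta_1,\dots,\beta_K)$.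 Sensing quantity at $\mathbf W$ (with $\mathbf F(\mathbf W)$ invertible): $\bm\Phi=\mathbf F(\mathbf W)^{-2}$ (real symmetric), partitioned into $M\times M$ blocks $\bm\Phi_{pq}$, $p,q\in\{1,2,3,4\}$; with $\mathrm j$ the imaginary unit, $\mathbf Q_{11}=\mathbf A\mathbf U^H(\bm\Phi_{11}\odot\dot{\mathbf B}_\theta^H\dot{\mathbf B}_\theta)\mathbf U\mathbf A^H+\dot{\mathbf A}_\theta\mathbf U^H(\bm\Phi_{11}\odot\mathbf B^H\dot{\mathbf B}_\theta)\mathbf U\mathbf A^H+\mathbf A\mathbf U^H(\bm\Phi_{11}\odot\dot{\mathbf B}_\theta^H\mathbf B)\mathbf U\dot{\mathbf A}_\theta^H+\dot{\mathbf A}_\theta\mathbf U^H(\bm\Phi_{11}\odot\mathbf B^H\mathbf B)\mathbf U\dot{\mathbf A}_\theta^H$; $\mathbf Q_{12}=2[\mathbf A\mathbf U^H(\bm\Phi_{12}\odot\dot{\mathbf B}_\theta^H\dot{\mathbf B}_\phi)\mathbf U\mathbf A^H+\dot{\mathbf A}_\theta\mathbf U^H(\bm\Phi_{12}\odot\mathbf B^H\dot{\mathbf B}_\phi)\mathbf U\mathbf A^H+\mathbf A\mathbf U^H(\bm\Phi_{12}\odot\dot{\mathbf B}_\theta^H\mathbf B)\mathbf U\dot{\mathbf A}_\phi^H+\dot{\mathbf A}_\theta\mathbf U^H(\bm\Phi_{12}\odot\mathbf B^H\mathbf B)\mathbf U\dot{\mathbf A}_\phi^H]$; $\mathbf Q_{22}$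 = $\mathbf Q_{11}$ with $\bm\Phi_{11}$ replaced by $\bm\Phi_{22}$ and $\theta$ by $\phi$; $\mathbf Q_{13}=\mathbf A\mathbf U^H((2\bm\Phi_{13}+2\mathrm j\bm\Phi_{14})\odot\dot{\mathbf B}_\theta^H\mathbf B)\mathbf A^H+\dot{\mathbf A}_\theta\mathbf U^H((2\bm\Phi_{13}+2\mathrm j\bm\Phi_{14})\odot\mathbf B^H\mathbf B)\mathbf A^H$; $\mathbf Q_{23}=\mathbf A\mathbf U^H((2\bm\Phi_{23}+2\mathrm j\bm\Phi_{24})\odot\dot{\mathbf B}_\phi^H\mathbf B)\mathbf A^H+\dot{\mathbf A}_\phi\mathbf U^H((2\bm\Phi_{23}+2\mathrm j\bm\Phi_{24})\odot\mathbf B^H\mathbf B)\mathbf A^H$; $\mathbf Q_{33}=\mathbf A((\bm\Phi_{33}+\bm\Phi_{44}+2\mathrm j\bm\Phi_{34})\odot\mathbf B^H\mathbf B)\mathbf A^H$; $\mathbf Q=\frac{2L}{\sigma_s^2}(\mathbf Q_{11}+\mathbf Q_{12}+\mathbf Q_{13}+\mathbf Q_{22}+\mathbf Q_{23}+\mathbf Q_{33})$. *)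

From HB Require Import structures.
From mathcomp Require Import all_boot all_order all_algebra.
From mathcomp Require Import all_classical all_reals all_analysis.
From mathcomp Require Import complex.

Set Implicit Arguments.
Unset Strict Implicit.
Unset Printing Implicit Defensive.

Import Order.TTheory GRing.Theory Num.Theory.
Local Open Scope ring_scope.
Local Open Scope complex_scope.

Section Defs.
Variable R : realType.
Local Notation C := R[i].

Definition cr (x : R) : C := x%:C.
Definition iu : C := 'i.
Definition nsq (z : C) : R := complex.Re z ^+ 2 + complex.Im z ^+ 2.

Definition hc m n (X : 'M[C]_(m, n)) : 'M[C]_(n, m) := (map_mx conjc X)^T.
Definition had m n (X Y : 'M[C]_(m, n)) : 'M[C]_(m, n) :=
  \matrix_(i, j) (X i j * Y i j).
Definition ReM m n (X : 'M[C]_(m, n)) : 'M[R]_(m, n) := map_mx (@complex.Re R) X.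
Definition ImM m n (X : 'M[C]_(m, n)) : 'M[R]_(m, n) := map_mx (@complex.Im R) X.
Definition crM m n (X : 'M[R]_(m, n)) : 'M[C]_(m, n) := map_mx cr X.

Definition cvec_differentiable n (f : R * R -> 'cV[C]_n) : Prop :=
  forall (i : 'I_n) p,
    differentiable (fun q : R * R => complex.Re (f q i 0)) p /\
    differentiable (fun q : R * R => complex.Im (f q i 0)) p.

Definition pd1 n (f : R * R -> 'cV[C]_n) (p : R * R) : 'cV[C]_n :=
  \col_i (cr (derive1 (fun x : R => complex.Re (f (x, p.2) i 0)) p.1)
          + iu * cr (derive1 (fun x : R => complex.Im (f (x, p.2) i 0)) p.1)).
Definition pd2 n (f : R * R -> 'cV[C]_n) (p : R * R) : 'cV[C]_n :=
  \col_i (cr (derive1 (fun y : R => complex.Re (f (p.1, y) i 0)) p.2)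
          + iu * cr (derive1 (fun y : R => complex.Im (f (p.1, y) i 0)) p.2)).

Variables (M : nat).
Definition stmx n (f : R * R -> 'cV[C]_n) (th ph : 'I_M -> R) : 'M[C]_(n, M) :=
  \matrix_(i, m) f (th m, ph m) i 0.
Definition dstmx1 n (f : R * R -> 'cV[C]_n) (th ph : 'I_M -> R) : 'M[C]_(n, M) :=
  \matrix_(i, m) pd1 f (th m, ph m) i 0.
Definition dstmx2 n (f : R * R -> 'cV[C]_n) (th ph : 'I_M -> R) : 'M[C]_(n, M) :=
  \matrix_(i, m) pd2 f (th m, ph m) i 0.
Definition Umx (alpha : 'I_M -> C) : 'M[C]_M := diag_mx (\row_m alpha m).

Variables (Nt Nr : nat).
Variables (a : R * R -> 'cV[C]_Nt) (b : R * R -> 'cV[C]_Nr).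
Variables (th ph : 'I_M -> R) (alpha : 'I_M -> C) (L : nat) (sigs2 : R).

Local Notation A := (stmx a th ph).
Local Notation Adt := (dstmx1 a th ph).
Local Notation Adp := (dstmx2 a th ph).
Local Notation B := (stmx b th ph).
Local Notation Bdt := (dstmx1 b th ph).
Local Notation Bdp := (dstmx2 b th ph).
Local Notation U := (Umx alpha).

Definition Fpat (Rx : 'M[C]_Nt) (Ad1 Ad2 : 'M[C]_(Nt, M)) (Bd1 Bd2 : 'M[C]_(Nr, M)) :=
    had (U *m hc A *m Rx *m A *m hc U)^T (hc Bd1 *m Bd2)
  + had (U *m hc A *m Rx *m Ad1 *m hc U)^T (hc B *m Bd2)
  + had (U *m hc Ad2 *m Rx *m A *m hc U)^T (hc Bd1 *m B)
  + had (U *m hc Ad2 *m Rx *m Ad1 *m hc U)^T (hc B *m B).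

Definition F11 Rx := Fpat Rx Adt Adt Bdt Bdt.
Definition F12 Rx := Fpat Rx Adt Adp Bdt Bdp.
Definition F22 Rx := Fpat Rx Adp Adp Bdp Bdp.
Definition F13 (Rx : 'M[C]_Nt) :=
    had (hc A *m Rx *m A *m hc U)^T (hc Bdt *m B)
  + had (hc A *m Rx *m Adt *m hc U)^T (hc B *m B).
Definition F23 (Rx : 'M[C]_Nt) :=
    had (hc A *m Rx *m A *m hc U)^T (hc Bdp *m B)
  + had (hc A *m Rx *m Adp *m hc U)^T (hc B *m B).
Definition F33 (Rx : 'M[C]_Nt) := had (hc A *m Rx *m A)^T (hc B *m B).

Definition FIMRx (Rx : 'M[C]_Nt) : 'M[R]_((M + M) + (M + M)) :=
  (2 * L%:R / sigs2) *:
  block_mx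
    (block_mx (ReM (F11 Rx)) (ReM (F12 Rx))
              (ReM (F12 Rx))^T (ReM (F22 Rx)))
    (block_mx (ReM (F13 Rx)) (- ImM (F13 Rx))
              (ReM (F23 Rx)) (- ImM (F23 Rx)))
    (block_mx (ReM (F13 Rx))^T (ReM (F23 Rx))^T
              (- (ImM (F13 Rx))^T) (- (ImM (F23 Rx))^T))
    (block_mx (ReM (F33 Rx)) (- ImM (F33 Rx))
              (- (ImM (F33 Rx))^T) (ReM (F33 Rx))).

Definition FIM p (W : 'M[C]_(Nt, p)) := FIMRx (W *m hc W).

Section Blocks.
Variable Phi : 'M[R]_((M + M) + (M + M)).
Definition Phi11 := ulsubmx (ulsubmx Phi).
Definition Phi12 := ursubmx (ulsubmx Phi).
Definition Phi22 := drsubmx (ulsubmx Phi).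
Definition Phi13 := ulsubmx (ursubmx Phi).
Definition Phi14 := ursubmx (ursubmx Phi).
Definition Phi23 := dlsubmx (ursubmx Phi).
Definition Phi24 := drsubmx (ursubmx Phi).
Definition Phi33 := ulsubmx (drsubmx Phi).
Definition Phi34 := ursubmx (drsubmx Phi).
Definition Phi44 := drsubmx (drsubmx Phi).
End Blocks.

Definition Qpat (X : 'M[C]_M) (Ad1 Ad2 : 'M[C]_(Nt, M)) (Bd1 Bd2 : 'M[C]_(Nr, M)) :=
    A *m hc U *m had X (hc Bd1 *m Bd2) *m U *m hc A
  + Ad1 *m hc U *m had X (hc B *m Bd2) *m U *m hc A
  + A *m hc U *m had X (hc Bd1 *m B) *m U *m hc Ad2
  + Ad1 *m hc U *m had X (hc B *m B) *m U *m hc Ad2.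

Definition Qmx (Phi : 'M[R]_((M + M) + (M + M))) : 'M[C]_Nt :=
  let Q11 := Qpat (crM (Phi11 Phi)) Adt Adt Bdt Bdt in
  let Q12 := 2%:R *: Qpat (crM (Phi12 Phi)) Adt Adp Bdt Bdp in
  let Q22 := Qpat (crM (Phi22 Phi)) Adp Adp Bdp Bdp in
  let X13 := 2%:R *: crM (Phi13 Phi) + (2%:R * iu) *: crM (Phi14 Phi) in
  let Q13 := A *m hc U *m had X13 (hc Bdt *m B) *m hc A
           + Adt *m hc U *m had X13 (hc B *m B) *m hc A in
  let X23 := 2%:R *: crM (Phi23 Phi) + (2%:R * iu) *: crM (Phi24 Phi) in
  let Q23 := A *m hc U *m had X23 (hc Bdp *m B) *m hc A
           + Adp *m hc U *m had X23 (hc B *m B) *m hc A in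
  let X33 := crM (Phi33 Phi) + crM (Phi44 Phi) + (2%:R * iu) *: crM (Phi34 Phi) in
  let Q33 := A *m had X33 (hc B *m B) *m hc A in
  cr (2 * L%:R / sigs2) *: (Q11 + Q12 + Q13 + Q22 + Q23 + Q33).

End Defs.

Section Comm.
Variable R : realType.
Local Notation C := R[i].
Variables (Nt K Ns : nat) (H : 'M[C]_(Nt, K)) (sigc2 : 'I_K -> R).

Definition gain (W : 'M[C]_(Nt, K + Ns)) (k j : 'I_K) : C :=
  (hc H *m lsubmx W) k j.
Definition sens_pow (W : 'M[C]_(Nt, K + Ns)) (k : 'I_K) : R :=
  \sum_(s < Ns) nsq ((hc H *m rsubmx W) k s).
Definition Ik (W : 'M[C]_(Nt, K + Ns)) (k : 'I_K) : R :=
  \sum_(j < K | j != k) nsq (gain W k j) + sens_pow W k + sigc2 k.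
Definition Tk W k : R := Ik W k + nsq (gain W k k).
Definition xik W k : R := nsq (gain W k k) / Ik W k.
Definition etak W k : C := conjc (gain W k k) / cr (Ik W k).
Definition betak W k : R := xik W k / Tk W k.
Definition Sigma1 W : 'M[C]_K := diag_mx (\row_k etak W k).
Definition Sigma2 W : 'M[C]_K := diag_mx (\row_k cr (betak W k)).

Definition rk (Wt W : 'M[C]_(Nt, K + Ns)) (k : 'I_K) : R :=
  ln (1 + xik Wt k) + 2 * complex.Re (gain W k k * etak Wt k) - xik Wt k
  - betak Wt k * (\sum_(j < K) nsq (gain W k j) + sens_pow W k + sigc2 k).
End Comm.

From Pilot Require Import Defs.
From HB Require Import structures.
From mathcomp Require Import all_boot all_order all_algebra.
From mathcomp Require Import all_classical all_reals all_analysis.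
From mathcomp Require Import complex.
From mathcomp Require Import ring.

(** Both objectives are affine in the quantities that depend on W, and they match
    term by term.

    Communications: r_k^[t](W) is a constant plus 2 Re((h_k^H w_ck) eta_k) minus
    beta_k (H^H W W^H H)_kk.  As Sigma1 and Sigma2 are diagonal, summing over k gives
    2 Re tr(W_c Sigma1 H^H) and tr(W W^H H Sigma2 H^H).

    Sensing: F(W) depends on W only through R_x = W W^H, and Q(Phi) is the adjoint of
    R_x |-> F(R_x): tr(F(R_x) Phi) = Re tr(R_x Q(Phi)) for every real symmetric Phi.
    Blockwise this is the Hadamard identity tr((G^T o Y) X^T) = tr(G (X o Y)) together
    with cyclicity of the trace, the real and imaginary blocks of F pairing with the
    blocks Phi_pq into real parts of complex traces.  Phi^[t] = F(W^[t])^-2 is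
    symmetric because F(W^[t]) is (F11, F22 and F33 are Hermitian), and -2 tr F^[t]
    is constant. *)

Set Implicit Arguments.
Unset Strict Implicit.
Unset Printing Implicit Defensive.

Import Order.TTheory GRing.Theory Num.Theory.
Local Open Scope ring_scope.
Local Open Scope complex_scope.

(* [Num.Theory] exports lemmas named [ReM] and [ImM]. *)
Local Notation ReM := Defs.ReM.
Local Notation ImM := Defs.ImM.

Section FrobeniusProduct.
Variable T : comPzRingType.

Definition mxdot m n (X Y : 'M[T]_(m, n)) : T := \tr (X *m Y^T).

Lemma mxdot_block m1 m2 n1 n2 (X11 Y11 : 'M[T]_(m1, n1)) (X12 Y12 : 'M[T]_(m1, n2))
    (X21 Y21 : 'M[T]_(m2, n1)) (X22 Y22 : 'M[T]_(m2, n2)) :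
  mxdot (block_mx X11 X12 X21 X22) (block_mx Y11 Y12 Y21 Y22)
  = mxdot X11 Y11 + mxdot X12 Y12 + mxdot X21 Y21 + mxdot X22 Y22.
Proof. by rewrite /mxdot tr_block_mx mulmx_block mxtrace_block !mxtraceD !addrA. Qed.

Lemma mxdot_tr m n (X Y : 'M[T]_(m, n)) : mxdot X^T Y^T = mxdot X Y.
Proof. by rewrite /mxdot trmxK -mxtrace_tr trmx_mul trmxK mxtrace_mulC. Qed.

Lemma mxdotNl m n (X Y : 'M[T]_(m, n)) : mxdot (- X) Y = - mxdot X Y.
Proof. by rewrite /mxdot mulNmx raddfN. Qed.

Lemma mxdotZr m n c (X Y : 'M[T]_(m, n)) : mxdot X (c *: Y) = c * mxdot X Y.
Proof. by rewrite /mxdot linearZ /= -scalemxAr mxtraceZ. Qed.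

Lemma mxdotDr m n (X Y Z : 'M[T]_(m, n)) : mxdot X (Y + Z) = mxdot X Y + mxdot X Z.
Proof. by rewrite /mxdot linearD /= mulmxDr mxtraceD. Qed.

Lemma mxdotDl m n (X Y Z : 'M[T]_(m, n)) : mxdot (X + Y) Z = mxdot X Z + mxdot Y Z.
Proof. by rewrite /mxdot mulmxDl mxtraceD. Qed.

Lemma mxdot0r m n (X : 'M[T]_(m, n)) : mxdot X 0 = 0.
Proof. by rewrite /mxdot trmx0 mulmx0 mxtrace0. Qed.

End FrobeniusProduct.

Section ConjugateTranspose.
Variable R : realType.
Local Notation C := R[i].

Lemma hc_mul m n p (X : 'M[C]_(m, n)) (Y : 'M[C]_(n, p)) : hc (X *m Y) = hc Y *m hc X.
Proof. by rewrite /hc map_mxM trmx_mul. Qed.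

Lemma hcK m n (X : 'M[C]_(m, n)) : hc (hc X) = X.
Proof. by apply/matrixP => i j; rewrite !mxE conjcK. Qed.

Lemma hcD m n (X Y : 'M[C]_(m, n)) : hc (X + Y) = hc X + hc Y.
Proof. by apply/matrixP => i j; rewrite !mxE rmorphD. Qed.

Lemma hc_had m (G Y : 'M[C]_m) : hc (had G^T Y) = had (hc G)^T (hc Y).
Proof. by apply/matrixP => i j; rewrite !mxE rmorphM. Qed.

Lemma ReM_hc m n (X : 'M[C]_(m, n)) : ReM (hc X) = (ReM X)^T.
Proof. by apply/matrixP => i j; rewrite !mxE; case: (X j i). Qed.

Lemma ReM_herm m (X : 'M[C]_m) : hc X = X -> (ReM X)^T = ReM X.
Proof. by move=> Xh; rewrite -ReM_hc Xh. Qed.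

Lemma mulcJ_nsq (z : C) : z * z^* = (nsq z)%:C.
Proof.
case: z => x y; rewrite /nsq; apply/eqP; rewrite eq_complex /=.
by apply/andP; split; apply/eqP; ring.
Qed.

Lemma ReD (x y : C) : complex.Re (x + y) = complex.Re x + complex.Re y.
Proof. exact: (raddfD (@complex.Re R : Rcomplex R -> R)). Qed.

Lemma Re_cr_mul (c : R) (z : C) : complex.Re (cr c * z) = c * complex.Re z.
Proof. by case: z => x y; rewrite /cr /= mul0r subr0. Qed.

Lemma Re_natr_mul n (z : C) : complex.Re (n%:R * z) = n%:R * complex.Re z.
Proof. by rewrite -Re_cr_mul /cr rmorph_nat. Qed.

Lemma hc_had_sum4 m (G1 G2 G3 G4 Y1 Y2 Y3 Y4 : 'M[C]_m) :
    hc G1 = G1 -> hc G2 = G3 -> hc G4 = G4 ->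
    hc Y1 = Y1 -> hc Y2 = Y3 -> hc Y4 = Y4 ->
  let S := had G1^T Y1 + had G2^T Y2 + had G3^T Y3 + had G4^T Y4 in hc S = S.
Proof.
move=> G1h G23 G4h Y1h Y23 Y4h /=.
have G32 : hc G3 = G2 by rewrite -G23 hcK.
have Y32 : hc Y3 = Y2 by rewrite -Y23 hcK.
rewrite !hcD !hc_had G1h G23 G32 G4h Y1h Y23 Y32 Y4h.
by congr (_ + _); exact: addrAC.
Qed.

Lemma Re_mxdot m n (X Y : 'M[C]_(m, n)) :
  complex.Re (mxdot X Y) = mxdot (ReM X) (ReM Y) - mxdot (ImM X) (ImM Y).
Proof.
rewrite /mxdot /mxtrace (raddf_sum (@complex.Re R : Rcomplex R -> R)) -sumrB.
apply: eq_bigr => i _; rewrite !mxE (raddf_sum (@complex.Re R : Rcomplex R -> R)) -sumrB.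
by apply: eq_bigr => j _; rewrite !mxE; case: (X i j) => x y; case: (Y i j).
Qed.

Lemma mxdot_had_tr m (G X Y : 'M[C]_m) : mxdot (had G^T Y) X = \tr (G *m had X Y).
Proof.
rewrite /mxdot /mxtrace.
transitivity (\sum_i \sum_j G j i * Y i j * X i j).
  by apply: eq_bigr => i _; rewrite !mxE; apply: eq_bigr => j _; rewrite !mxE.
rewrite exchange_big /=; apply: eq_bigr => i _; rewrite mxE; apply: eq_bigr => j _.
by rewrite !mxE -mulrA [Y _ _ * _]mulrC.
Qed.

Lemma mxtrace_mul_had m n (P : 'M[C]_(m, n)) (Rx : 'M[C]_n) (S : 'M[C]_(n, m))
    (X Y : 'M[C]_m) :
  \tr (Rx *m (S *m had X Y *m P)) = mxdot (had (P *m Rx *m S)^T Y) X.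
Proof. by rewrite mxdot_had_tr -!mulmxA (mxtrace_mulC P) -!mulmxA. Qed.

End ConjugateTranspose.

Section SymmetricBlocks.
Variables (R : realType) (M : nat).

Lemma symmx_blockE (Phi : 'M[R]_((M + M) + (M + M))) : Phi^T = Phi ->
  Phi = block_mx
    (block_mx (Phi11 Phi) (Phi12 Phi) (Phi12 Phi)^T (Phi22 Phi))
    (block_mx (Phi13 Phi) (Phi14 Phi) (Phi23 Phi) (Phi24 Phi))
    (block_mx (Phi13 Phi)^T (Phi23 Phi)^T (Phi14 Phi)^T (Phi24 Phi)^T)
    (block_mx (Phi33 Phi) (Phi34 Phi) (Phi34 Phi)^T (Phi44 Phi)).
Proof.
move=> Phi_sym.
have ul : ulsubmx Phi = block_mx (Phi11 Phi) (Phi12 Phi) (Phi12 Phi)^T (Phi22 Phi).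
  by rewrite -[LHS]submxK /Phi12 trmx_ursub trmx_ulsub Phi_sym.
have dr : drsubmx Phi = block_mx (Phi33 Phi) (Phi34 Phi) (Phi34 Phi)^T (Phi44 Phi).
  by rewrite -[LHS]submxK /Phi34 trmx_ursub trmx_drsub Phi_sym.
have ur : ursubmx Phi = block_mx (Phi13 Phi) (Phi14 Phi) (Phi23 Phi) (Phi24 Phi).
  by rewrite -[LHS]submxK.
have dl : dlsubmx Phi = (ursubmx Phi)^T by rewrite trmx_ursub Phi_sym.
by rewrite -[LHS]submxK ul ur dl dr ur tr_block_mx.
Qed.

End SymmetricBlocks.

Section SensingModel.
Variables (R : realType) (M Nt Nr : nat).
Local Notation C := R[i].
Variables (a : R * R -> 'cV[C]_Nt) (b : R * R -> 'cV[C]_Nr).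
Variables (th ph : 'I_M -> R) (alpha : 'I_M -> C) (L : nat) (sigs2 : R).

Section HermitianCovariance.
Variable Rx : 'M[C]_Nt.
Hypothesis Rx_herm : hc Rx = Rx.

Lemma Fpat_hc (Ad : 'M[C]_(Nt, M)) (Bd : 'M[C]_(Nr, M)) :
  hc (Fpat a b th ph alpha Rx Ad Ad Bd Bd) = Fpat a b th ph alpha Rx Ad Ad Bd Bd.
Proof.
rewrite /Fpat; move: (stmx a th ph) (stmx b th ph) (Umx alpha) => A B U.
by apply: hc_had_sum4; rewrite !hc_mul !hcK ?Rx_herm ?mulmxA.
Qed.

Lemma F33_hc : hc (F33 a b th ph Rx) = F33 a b th ph Rx.
Proof.
rewrite /F33; move: (stmx a th ph) (stmx b th ph) => A B.
by rewrite hc_had !hc_mul !hcK Rx_herm !mulmxA.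
Qed.

Lemma FIMRx_sym : (FIMRx a b th ph alpha L sigs2 Rx)^T = FIMRx a b th ph alpha L sigs2 Rx.
Proof.
have F11h : hc (F11 a b th ph alpha Rx) = F11 a b th ph alpha Rx :=
  Fpat_hc (dstmx1 a th ph) (dstmx1 b th ph).
have F22h : hc (F22 a b th ph alpha Rx) = F22 a b th ph alpha Rx :=
  Fpat_hc (dstmx2 a th ph) (dstmx2 b th ph).
rewrite /FIMRx; move: (F11 _ _ _ _ _ _) (F12 _ _ _ _ _ _) (F22 _ _ _ _ _ _)
  (F13 _ _ _ _ _ _) (F23 _ _ _ _ _ _) (F33 _ _ _ _ _) F11h F22h F33_hc.
move=> F11 F12 F22 F13 F23 F33 /ReM_herm F11s /ReM_herm F22s /ReM_herm F33s.
by rewrite linearZ /= !tr_block_mx ![(- _)^T]linearN /= !trmxK F11s F22s F33s.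
Qed.

End HermitianCovariance.

Lemma FIM_sym p (W : 'M[C]_(Nt, p)) :
  (FIM a b th ph alpha L sigs2 W)^T = FIM a b th ph alpha L sigs2 W.
Proof. by apply: FIMRx_sym; rewrite hc_mul hcK. Qed.

Lemma mxtrace_Qpat (Rx : 'M[C]_Nt) (X : 'M[C]_M) Ad1 Ad2 Bd1 Bd2 :
  \tr (Rx *m Qpat a b th ph alpha X Ad1 Ad2 Bd1 Bd2)
  = mxdot (Fpat a b th ph alpha Rx Ad1 Ad2 Bd1 Bd2) X.
Proof.
rewrite /Qpat /Fpat; move: (stmx a th ph) (stmx b th ph) (Umx alpha) => A B U.
rewrite !mulmxDr !mxtraceD !mxdotDl.
by congr (_ + _ + _ + _); rewrite -mulmxA mxtrace_mul_had !mulmxA.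
Qed.

Lemma mxtrace_Q13 (Rx : 'M[C]_Nt) (X : 'M[C]_M) Ad Bd :
  let A := stmx a th ph in let B := stmx b th ph in let U := Umx alpha in
  \tr (Rx *m (A *m hc U *m had X (hc Bd *m B) *m hc A
              + Ad *m hc U *m had X (hc B *m B) *m hc A))
  = mxdot (had (hc A *m Rx *m A *m hc U)^T (hc Bd *m B)
           + had (hc A *m Rx *m Ad *m hc U)^T (hc B *m B)) X.
Proof.
move=> /=; move: (stmx a th ph) (stmx b th ph) (Umx alpha) => A B U.
rewrite mulmxDr mxtraceD mxdotDl.
by congr (_ + _); rewrite mxtrace_mul_had !mulmxA.
Qed.

Local Notation X13 Phi :=
  (2%:R *: crM (Phi13 Phi) + (2%:R * iu R) *: crM (Phi14 Phi)).
Local Notation X23 Phi :=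
  (2%:R *: crM (Phi23 Phi) + (2%:R * iu R) *: crM (Phi24 Phi)).
Local Notation X33 Phi :=
  (crM (Phi33 Phi) + crM (Phi44 Phi) + (2%:R * iu R) *: crM (Phi34 Phi)).

Lemma mxtrace_Qmx (Rx : 'M[C]_Nt) (Phi : 'M[R]_((M + M) + (M + M))) :
  \tr (Rx *m Qmx a b th ph alpha L sigs2 Phi)
  = cr (2 * L%:R / sigs2) * (mxdot (F11 a b th ph alpha Rx) (crM (Phi11 Phi))
      + 2%:R * mxdot (F12 a b th ph alpha Rx) (crM (Phi12 Phi))
      + mxdot (F13 a b th ph alpha Rx) (X13 Phi)
      + mxdot (F22 a b th ph alpha Rx) (crM (Phi22 Phi))
      + mxdot (F23 a b th ph alpha Rx) (X23 Phi)
      + mxdot (F33 a b th ph Rx) (X33 Phi)).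
Proof.
rewrite /Qmx /=.
rewrite -scalemxAr mxtraceZ; congr (_ * _).
do 5!rewrite mulmxDr mxtraceD.
congr (_ + _ + _ + _ + _ + _).
- exact: mxtrace_Qpat.
- by rewrite -scalemxAr mxtraceZ mxtrace_Qpat.
- exact: mxtrace_Q13.
- exact: mxtrace_Qpat.
- exact: mxtrace_Q13.
- exact: mxtrace_mul_had.
Qed.

Lemma mxtrace_FIMRx (Rx : 'M[C]_Nt) (Phi : 'M[R]_((M + M) + (M + M))) : Phi^T = Phi ->
  \tr (FIMRx a b th ph alpha L sigs2 Rx *m Phi)
  = 2 * L%:R / sigs2 * complex.Re (mxdot (F11 a b th ph alpha Rx) (crM (Phi11 Phi))
      + 2%:R * mxdot (F12 a b th ph alpha Rx) (crM (Phi12 Phi))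
      + mxdot (F13 a b th ph alpha Rx) (X13 Phi)
      + mxdot (F22 a b th ph alpha Rx) (crM (Phi22 Phi))
      + mxdot (F23 a b th ph alpha Rx) (X23 Phi)
      + mxdot (F33 a b th ph Rx) (X33 Phi)).
Proof.
move=> Phi_sym.
have ReM_crM (P : 'M[R]_M) : ReM (crM P) = P by apply/matrixP => i j; rewrite !mxE.
have ImM_crM (P : 'M[R]_M) : ImM (crM P) = 0 by apply/matrixP => i j; rewrite !mxE.
have ReX13 (P Q : 'M[R]_M) : ReM (2%:R *: crM P + (2%:R * iu R) *: crM Q) = 2 *: P.
  by apply/matrixP => i j; rewrite !mxE /=; ring.
have ImX13 (P Q : 'M[R]_M) : ImM (2%:R *: crM P + (2%:R * iu R) *: crM Q) = 2 *: Q.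
  by apply/matrixP => i j; rewrite !mxE /=; ring.
have ReX33 (P Q S : 'M[R]_M) :
    ReM (crM P + crM Q + (2%:R * iu R) *: crM S) = P + Q.
  by apply/matrixP => i j; rewrite !mxE /=; ring.
have ImX33 (P Q S : 'M[R]_M) :
    ImM (crM P + crM Q + (2%:R * iu R) *: crM S) = 2 *: S.
  by apply/matrixP => i j; rewrite !mxE /=; ring.
rewrite /FIMRx -scalemxAl mxtraceZ -[Phi in \tr (_ *m Phi)]Phi_sym -/(mxdot _ Phi).
rewrite {1}(symmx_blockE Phi_sym).
move: (F11 _ _ _ _ _ _ : 'M[C]_M) (F12 _ _ _ _ _ _ : 'M[C]_M)
  (F22 _ _ _ _ _ _ : 'M[C]_M) (F13 _ _ _ _ _ _ : 'M[C]_M) (F23 _ _ _ _ _ _ : 'M[C]_M)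
  (F33 _ _ _ _ _ : 'M[C]_M) (Phi11 Phi) (Phi12 Phi) (Phi22 Phi) (Phi13 Phi)
  (Phi14 Phi) (Phi23 Phi) (Phi24 Phi) (Phi33 Phi) (Phi34 Phi) (Phi44 Phi).
move=> F11 F12 F22 F13 F23 F33 P11 P12 P22 P13 P14 P23 P24 P33 P34 P44.
rewrite !mxdot_block !ReD Re_natr_mul.
(* ssreflect's [rewrite] would compare the six traces with each other up to
   conversion, which takes minutes; [setoid_rewrite] matches syntactically. *)
setoid_rewrite Re_mxdot.
rewrite !ReM_crM !ImM_crM ReX13 ImX13 ReX13 ImX13 ReX33 ImX33.
rewrite !mxdot0r !mxdotZr !mxdotDr !mxdotNl !mxdot_tr.
ring.
Qed.

Lemma FIMRx_Qmx (Rx : 'M[C]_Nt) (Phi : 'M[R]_((M + M) + (M + M))) : Phi^T = Phi ->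
  \tr (FIMRx a b th ph alpha L sigs2 Rx *m Phi)
  = complex.Re (\tr (Rx *m Qmx a b th ph alpha L sigs2 Phi)).
Proof. by move=> Phi_sym; rewrite mxtrace_Qmx Re_cr_mul mxtrace_FIMRx. Qed.

End SensingModel.

Section Communications.
Variables (R : realType) (Nt K Ns : nat) (H : 'M[R[i]]_(Nt, K)) (sigc2 : 'I_K -> R).
Variable Wt : 'M[R[i]]_(Nt, K + Ns).

Definition rk0 (k : 'I_K) : R :=
  ln (1 + xik H sigc2 Wt k) - xik H sigc2 Wt k - betak H sigc2 Wt k * sigc2 k.

Lemma sum_rk (W : 'M[R[i]]_(Nt, K + Ns)) :
  \sum_k rk H sigc2 Wt W k
  = \sum_k rk0 k + 2 * \sum_k complex.Re (gain H W k k * etak H sigc2 Wt k)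
    - \sum_k betak H sigc2 Wt k * (\sum_(j < K) nsq (gain H W k j) + sens_pow H W k).
Proof.
rewrite mulr_sumr -big_split -sumrB /=; apply: eq_bigr => k _.
by rewrite /rk /rk0; ring.
Qed.

Lemma Re_mxtrace_Sigma1 (W : 'M[R[i]]_(Nt, K + Ns)) :
  complex.Re (\tr (lsubmx W *m Sigma1 H sigc2 Wt *m hc H))
  = \sum_k complex.Re (gain H W k k * etak H sigc2 Wt k).
Proof.
rewrite /Sigma1 mxtrace_mulC mulmxA mul_mx_diag /mxtrace.
rewrite (raddf_sum (@complex.Re R : Rcomplex R -> R)).
by apply: eq_bigr => k _; rewrite /gain !mxE.
Qed.

Lemma mxtrace_Sigma2 (W : 'M[R[i]]_(Nt, K + Ns)) :
  \tr (W *m hc W *m H *m Sigma2 H sigc2 Wt *m hc H)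
  = cr (\sum_k betak H sigc2 Wt k *
          (\sum_(j < K) nsq (gain H W k j) + sens_pow H W k)).
Proof.
rewrite /Sigma2 mxtrace_mulC !mulmxA mul_mx_diag /mxtrace /cr rmorph_sum.
apply: eq_bigr => k _; rewrite mxE [X in _ * X]mxE.
have -> : hc H *m W *m hc W *m H = (hc H *m W) *m hc (hc H *m W).
  by rewrite hc_mul hcK !mulmxA.
rewrite mxE big_split_ord /= mulrC [RHS]rmorphM; congr (_ * _).
rewrite [RHS]rmorphD /sens_pow !rmorph_sum; congr (_ + _);
  apply: eq_bigr => j _; apply: etrans (mulcJ_nsq _); rewrite /gain.
  by rewrite mulmx_lsub; congr (_ * _); rewrite !mxE.
by rewrite mulmx_rsub; congr (_ * _); rewrite !mxE.
Qed.

End Communications.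

Theorem proposition2 (R : realType)
  (Nt Nr K M L Ns : nat)
  (HNt : (0 < Nt)%N) (HNr : (0 < Nr)%N) (HK : (0 < K)%N) (HM : (0 < M)%N)
  (HL : (0 < L)%N)
  (H : 'M[R[i]]_(Nt, K)) (sigc2 : 'I_K -> R) (Hsigc : forall k, 0 < sigc2 k)
  (sigs2 : R) (Hsigs : 0 < sigs2)
  (dc ds : R) (Hdc : 0 <= dc) (Hds : 0 <= ds) (Pt : R) (HPt : 0 < Pt)
  (a : R * R -> 'cV[R[i]]_Nt) (b : R * R -> 'cV[R[i]]_Nr)
  (Ha : cvec_differentiable a) (Hb : cvec_differentiable b)
  (th ph : 'I_M -> R) (alpha : 'I_M -> R[i])
  (Wt : 'M[R[i]]_(Nt, K + Ns))
  (HWt : \tr (Wt *m hc Wt) = cr Pt)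
  (HFt : FIM a b th ph alpha L sigs2 Wt \in unitmx) :
  let F := FIM a b th ph alpha L sigs2 in
  let Ft := F _ Wt in
  let Phit := invmx Ft *m invmx Ft in
  let Qt := Qmx a b th ph alpha L sigs2 Phit in
  let obj1 := fun W : 'M[R[i]]_(Nt, K + Ns) =>
    dc * (\sum_(k < K) rk H sigc2 Wt W k)
    + ds * (\tr (F _ W *m Phit) - 2 * \tr Ft) in
  let obj2 := fun W : 'M[R[i]]_(Nt, K + Ns) =>
    cr (2 * dc * complex.Re (\tr (lsubmx W *m Sigma1 H sigc2 Wt *m hc H)))
    + cr (ds * complex.Re (\tr (W *m hc W *m Qt)))
    - cr dc * \tr (W *m hc W *m H *m Sigma2 H sigc2 Wt *m hc H) in
  exists c : R, forall W : 'M[R[i]]_(Nt, K + Ns),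
    \tr (W *m hc W) = cr Pt -> cr (obj1 W) = obj2 W + cr c.
Proof.
move=> F Ft Phit Qt obj1 obj2.
have Phit_sym : Phit^T = Phit by rewrite trmx_mul trmx_inv FIM_sym.
exists (dc * \sum_k rk0 H sigc2 Wt k - ds * (2 * \tr Ft)) => W _.
rewrite /obj1 /obj2 /Qt /F /FIM sum_rk FIMRx_Qmx // Re_mxtrace_Sigma1 mxtrace_Sigma2.
rewrite /cr -rmorphM -rmorphD -rmorphB -rmorphD; congr (_%:C).
have regroup (r0 g s q t : R) : dc * (r0 + 2 * g - s) + ds * (q - 2 * t)
    = 2 * dc * g + ds * q - dc * s + (dc * r0 - ds * (2 * t)) by ring.
exact: regroup.
Qed.
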